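(* Let $\mathcal{A}$ be a non-unital normed algebra possessing an approximate identity, and let $\mathcal{I}_r(\mathcal{A})$ denote the set of all closed proper right ideals of $\mathcal{A}$. Then $$\mathrm{AppInv}_r(\mathcal{A})=\mathcal{A}\setminus\bigcup_{I\in\mathcal{I}_r(\mathcal{A})} I .$$
   Context: An approximate identity in a normed algebra $\mathcal{A}$ is a net $(e_j)_{j\in J}$ in $\mathcal{A}$ such that $\lim_{j} e_j y=\lim_j y e_j=y$ for every $y\in\mathcal{A}$. An element $x\in\mathcal{A}$ is approximately right invertible if there is a net $(r_j)_{j\in J}$ in $\mathcal{A}$ such that $(xr_j)_{j\in J}$ is an approximate identity in $\mathcal{A}$. $\mathrm{AppInv}_r(\mathcal{A})$ denotes the set of approximately right invertible elements of $\mathcal{A}$. *)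

From HB Require Import structures.
From mathcomp Require Import all_boot all_order all_algebra.
From mathcomp Require Import all_classical all_reals all_analysis.
Set Implicit Arguments. Unset Strict Implicit. Unset Printing Implicit Defensive.
Import Order.TTheory GRing.Theory Num.Theory.
Import numFieldNormedType.Exports.
Local Open Scope classical_set_scope.
Local Open Scope ring_scope.

Definition normed_algebra (K : numFieldType) (V : normedModType K)
  (mul : V -> V -> V) : Prop :=
  [/\ (forall x y z, mul x (mul y z) = mul (mul x y) z),
      (forall (a : K) x y z, mul (a *: x + y) z = a *: mul x z + mul y z),
      (forall (a : K) x y z, mul z (a *: x + y) = a *: mul z x + mul z y) &
      (forall x y, `|mul x y| <= `|x| * `|y|)].

Definition directed (J : Type) (le : J -> J -> Prop) : Prop :=
  [/\ (forall i, le i i),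
      (forall i j k, le i j -> le j k -> le i k),
      inhabited J &
      (forall i j, exists k, le i k /\ le j k)].

Definition net_lim (K : numFieldType) (V : normedModType K)
  (J : Type) (le : J -> J -> Prop) (u : J -> V) (l : V) : Prop :=
  forall eps : K, 0 < eps -> exists j0, forall j, le j0 j -> `|u j - l| < eps.

Definition approx_identity (K : numFieldType) (V : normedModType K)
  (mul : V -> V -> V) (J : Type) (le : J -> J -> Prop) (e : J -> V) : Prop :=
  forall y, net_lim le (fun j => mul (e j) y) y /\
            net_lim le (fun j => mul y (e j)) y.

Definition has_approx_identity (K : numFieldType) (V : normedModType K)
  (mul : V -> V -> V) : Prop :=
  exists (J : Type) (le : J -> J -> Prop) (e : J -> V),
    directed le /\ approx_identity mul le e.

Definition AppInv_r (K : numFieldType) (V : normedModType K)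
  (mul : V -> V -> V) : set V :=
  [set x | exists (J : Type) (le : J -> J -> Prop) (r : J -> V),
      directed le /\ approx_identity mul le (fun j => mul x (r j))].

Definition right_ideal (K : numFieldType) (V : normedModType K)
  (mul : V -> V -> V) (I : set V) : Prop :=
  [/\ I 0,
      (forall x y, I x -> I y -> I (x + y)),
      (forall (a : K) x, I x -> I (a *: x)) &
      (forall x a, I x -> I (mul x a))].

Definition closed_proper_right_ideals (K : numFieldType) (V : normedModType K)
  (mul : V -> V -> V) : set (set V) :=
  [set I | right_ideal mul I /\ closed I /\ I != setT].

From HB Require Import structures.
From mathcomp Require Import all_boot all_order all_algebra.
From mathcomp Require Import all_classical all_reals all_analysis.
Set Implicit Arguments. Unset Strict Implicit. Unset Printing Implicit Defensive.
Import Order.TTheory GRing.Theory Num.Theory.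
Import numFieldNormedType.Exports.
Local Open Scope classical_set_scope.
Local Open Scope ring_scope.

(* For x in the algebra A write [approx_ideal x] for the
   norm closure of the set xA = { x a | a in A }.
   - If x is approximately right invertible and I is a closed right ideal
     containing x, then every y is a limit of elements (x r_j) y of I, so
     I is the whole algebra: x lies in no closed proper right ideal.
   - Conversely, [approx_ideal x] is always a closed right ideal, and it
     contains x as soon as the algebra has an approximate identity (e_j):
     x = lim x e_j.  So if x lies in no closed proper right ideal,
     [approx_ideal x] is everything; in particular each e_j is approximated
     within any d > 0 by some x r.  Indexing these r by pairs (j, d), ordered
     by "j grows and d shrinks", turns (x r_(j,d)) into a perturbation of the
     approximate identity (e_j) whose error tends to 0, hence again an
     approximate identity. *)

Lemma closed_normP (K : numFieldType) (V : normedModType K) (I : set V) :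
  closed I <->
  (forall y, (forall eps : K, 0 < eps -> exists z, I z /\ `|y - z| < eps) ->
   I y).
Proof.
split=> [cI y approx_y | approxI y cly].
- apply: cI => B /nbhs_ex [d ballB].
  have [z [Iz yz]] := approx_y d%:num (gt0 d).
  by exists z; split => //; apply: ballB; rewrite -ball_normE.
- apply: approxI => eps eps_gt0.
  have [z [Iz yz]] := cly _ (nbhsx_ballx y eps eps_gt0).
  by exists z; split => //; move: yz; rewrite -ball_normE.
Qed.

Lemma lt_mul_small (K : numFieldType) (a u eps : K) :
  0 < eps -> 0 <= a -> u <= eps / (a + 1) -> u * a < eps.
Proof.
move=> eps_gt0 a_ge0 u_small.
have a1_gt0 : 0 < a + 1 by rewrite ltr_wpDl.
apply: (@le_lt_trans _ _ (eps / (a + 1) * a)); first by rewrite ler_wpM2r.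
rewrite -[X in _ < X](divfK (lt0r_neq0 a1_gt0)) ltr_pM2l ?ltrDl //.
by rewrite divr_gt0.
Qed.

Lemma small_bound_gt0 (K : numFieldType) (eps a : K) :
  0 < eps -> 0 <= a -> 0 < eps / (a + 1).
Proof. by move=> eps_gt0 a_ge0; rewrite divr_gt0 // ltr_wpDl. Qed.

Lemma norm_split_lt (K : numFieldType) (V : normedModType K) (u v : V)
    (eps : K) :
  `|u| < eps / 2 -> `|v| < eps / 2 -> `|u + v| < eps.
Proof.
move=> u_small v_small; apply: le_lt_trans (ler_normD _ _) _.
by rewrite [eps]splitr; apply: ltrD.
Qed.

Definition refine_le (K : numFieldType) (J : Type) (le : J -> J -> Prop)
    (p q : J * {posnum K}) : Prop :=
  le p.1 q.1 /\ q.2%:num <= p.2%:num.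

Lemma directed_refine (K : numFieldType) (J : Type) (le : J -> J -> Prop) :
  directed le -> directed (@refine_le K J le).
Proof.
case=> le_refl le_trans [j] le_ub; split.
- by move=> p; split; [apply: le_refl | exact: lexx].
- move=> p q s [pq1 pq2] [qs1 qs2]; split; first exact: le_trans pq1 qs1.
  exact: Order.POrderTheory.le_trans qs2 pq2.
- exact: inhabits (j, 1%:pos).
- move=> [i1 d1] [i2 d2]; have [k [ik1 ik2]] := le_ub i1 i2.
  exists (k, (Num.min d1%:num d2%:num)%:pos).
  by split; split => //=; rewrite num_ge_min lexx ?orbT.
Qed.

Lemma net_lim_refine (K : numFieldType) (V : normedModType K) (J : Type)
    (le : J -> J -> Prop) (f : J -> V) (g : J * {posnum K} -> V) (c : K)
    (l : V) :
  0 <= c -> net_lim le f l ->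
  (forall p, `|g p - f p.1| <= c * p.2%:num) ->
  net_lim (@refine_le K J le) g l.
Proof.
move=> c_ge0 f_lim g_near eps eps_gt0.
have eps2_gt0 : 0 < eps / 2 by rewrite divr_gt0.
have [j0 f_close] := f_lim _ eps2_gt0.
exists (j0, PosNum (small_bound_gt0 eps2_gt0 c_ge0)) => -[j d] [/= j0j dd].
have -> : g (j, d) - l = (g (j, d) - f j) + (f j - l) by rewrite addrA subrK.
apply: norm_split_lt (f_close _ j0j).
apply: le_lt_trans (g_near (j, d)) _; rewrite mulrC.
exact: lt_mul_small eps2_gt0 c_ge0 dd.
Qed.

Section NormedAlgebra.
Variables (K : numFieldType) (V : normedModType K) (mul : V -> V -> V).
Hypothesis hA : normed_algebra mul.

Lemma amulDr x y z : mul z (x + y) = mul z x + mul z y.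
Proof. by case: hA => _ _ radd _; have := radd 1 x y z; rewrite !scale1r. Qed.

Lemma amul0r z : mul z 0 = 0.
Proof. by apply: (addrI (mul z 0)); rewrite addr0 -amulDr addr0. Qed.

Lemma amulZr (a : K) x z : mul z (a *: x) = a *: mul z x.
Proof.
by rewrite -[a *: x]addr0; case: hA => _ _ -> _; rewrite amul0r addr0.
Qed.

Lemma amulBl x y z : mul (x - y) z = mul x z - mul y z.
Proof.
case: hA => _ ladd _ _; have := ladd (-1) y x z.
by rewrite !scaleN1r addrC => ->; rewrite addrC.
Qed.

Lemma amulBr x y z : mul z (x - y) = mul z x - mul z y.
Proof. by rewrite amulDr -scaleN1r amulZr scaleN1r. Qed.

Lemma norm_amul_le x y : `|mul x y| <= `|x| * `|y|.
Proof. by case: hA. Qed.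

Definition approx_ideal (x : V) : set V :=
  [set y | forall eps : K, 0 < eps -> exists a, `|y - mul x a| < eps].

Lemma approx_ideal_right_ideal x : right_ideal mul (approx_ideal x).
Proof.
split.
- by move=> eps eps_gt0; exists 0; rewrite amul0r subrr normr0.
- move=> y1 y2 y1_approx y2_approx eps eps_gt0.
  have eps2_gt0 : 0 < eps / 2 by rewrite divr_gt0.
  have [a1 close1] := y1_approx _ eps2_gt0.
  have [a2 close2] := y2_approx _ eps2_gt0.
  exists (a1 + a2); rewrite amulDr opprD addrACA.
  exact: norm_split_lt.
- move=> c y y_approx eps eps_gt0.
  have [a close] := y_approx _ (small_bound_gt0 eps_gt0 (normr_ge0 c)).
  exists (c *: a); rewrite amulZr -scalerBr normrZ mulrC.
  exact: lt_mul_small eps_gt0 (normr_ge0 c) (ltW close).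
- move=> y b y_approx eps eps_gt0.
  have [a close] := y_approx _ (small_bound_gt0 eps_gt0 (normr_ge0 b)).
  exists (mul a b); case: hA => massoc _ _ _; rewrite massoc -amulBl.
  apply: le_lt_trans (norm_amul_le _ _) _.
  exact: lt_mul_small eps_gt0 (normr_ge0 b) (ltW close).
Qed.

Lemma approx_ideal_closed x : closed (approx_ideal x).
Proof.
apply/closed_normP => y y_approx eps eps_gt0.
have eps2_gt0 : 0 < eps / 2 by rewrite divr_gt0.
have [z [z_approx yz]] := y_approx _ eps2_gt0.
have [a za] := z_approx _ eps2_gt0.
exists a; rewrite -[y](subrK z) -addrA.
exact: norm_split_lt.
Qed.

(* With an approximate identity, x = lim x e_j lies in the closure of x A. *)
Lemma approx_ideal_self J (le : J -> J -> Prop) (e : J -> V) x :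
  directed le -> approx_identity mul le e -> approx_ideal x x.
Proof.
case=> le_refl _ _ _ ai eps eps_gt0.
have [j0 close] := (ai x).2 eps eps_gt0.
by exists (e j0); rewrite distrC; apply: close; apply: le_refl.
Qed.

(* An approximately right invertible element lies in no closed proper right
   ideal: a closed right ideal containing it contains every y = lim x r_j y. *)
Lemma appinv_ideal_full x I :
  AppInv_r mul x -> right_ideal mul I -> closed I -> I x -> I = setT.
Proof.
move=> [J [le [r [[le_refl _ _ _] ai]]]] [_ _ _ I_mul] /closed_normP cI Ix.
apply/seteqP; split => // y _; apply: cI => eps eps_gt0.
have [j0 close] := (ai y).1 eps eps_gt0.
exists (mul (mul x (r j0)) y); split; first by apply: (I_mul); apply: (I_mul).
by rewrite distrC; apply: close; apply: le_refl.
Qed.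

(* If every element is approximated by x A, then approximate right inverses
   of x are obtained by approximating the terms of an approximate identity
   to finer and finer tolerance. *)
Lemma approx_ideal_full_appinv J (le : J -> J -> Prop) (e : J -> V) x :
  directed le -> approx_identity mul le e -> approx_ideal x = setT ->
  AppInv_r mul x.
Proof.
move=> dir ai full.
have /choice [r r_close] : forall p : J * {posnum K},
    exists a, `|e p.1 - mul x a| < p.2%:num.
  move=> p; have e_approx : approx_ideal x (e p.1) by rewrite full.
  exact: e_approx _ (gt0 p.2).
have err_le p : `|mul x (r p) - e p.1| <= p.2%:num.
  by rewrite distrC; apply: ltW.
exists (J * {posnum K})%type, (@refine_le K J le), r.
split; first exact: directed_refine.
move=> y; split.
- apply: (net_lim_refine (c := `|y|)) (ai y).1 _ => // p.
  rewrite -amulBl mulrC; apply: le_trans (norm_amul_le _ _) _.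
  exact: ler_wpM2r (normr_ge0 y) _ _ (err_le p).
- apply: (net_lim_refine (c := `|y|)) (ai y).2 _ => // p.
  rewrite -amulBr; apply: le_trans (norm_amul_le _ _) _.
  exact: ler_wpM2l (normr_ge0 y) _ _ (err_le p).
Qed.

End NormedAlgebra.

Theorem theorem2p10 (K : numFieldType) (V : normedModType K)
  (mul : V -> V -> V) (hA : normed_algebra mul)
  (happ : has_approx_identity mul) :
  AppInv_r mul = setT `\` \bigcup_(I in closed_proper_right_ideals mul) I.
Proof.
apply/seteqP; split.
  move=> x x_appinv; split => //; case=> I [idealI [cI /eqP proper]] Ix.
  exact: proper (appinv_ideal_full x_appinv idealI cI Ix).
move=> x [_ not_in_ideal]; have [J [le [e [dir ai]]]] := happ.
apply: (approx_ideal_full_appinv hA dir ai).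
apply: contra_notP not_in_ideal => /eqP proper.
exists (approx_ideal mul x); last exact: approx_ideal_self dir ai.
split; first exact: approx_ideal_right_ideal.
by split; first exact: approx_ideal_closed.
Qed.
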